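(* The map $V:\mathcal S^{2,2}\to\mathcal S^{2,2}$ has a unique fixed point $p=(1/2,0,1/2,0)$, and there is a neighborhood $\mathcal U(p)\subset\mathcal S^{2,2}$ of $p$, open relative to $\mathcal S^{2,2}$, such that $\lim_{n\to\infty}V^n(s)=p$ for every $s\in\mathcal U(p)$.
   Context: $\mathcal S^{2,2}=\{(x,y,u,v)\in\mathbb{R}^4: x,y,u,v\ge0,\ x+y+u+v=1,\ x+y>0,\ u+v>0\}$. $V:\mathcal S^{2,2}\to\mathcal S^{2,2}$ is $V(x,y,u,v)=(x',y',u',v')$ with $x'=\dfrac{2xu+yu}{4(x+y)(u+v)}$, $y'=\dfrac{6xv+3yu+4yv}{12(x+y)(u+v)}$, $u'=\dfrac{6xu+6xv+3yu+4yv}{12(x+y)(u+v)}$, $v'=\dfrac{3yu+4yv}{12(x+y)(u+v)}$. $V^n$ denotes the $n$-fold iterate. *)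

From Stdlib Require Import Reals Lra.
Open Scope R_scope.

Record pt4 : Type := P4 { px : R; py : R; pu : R; pv : R }.

Definition S22 (s : pt4) : Prop :=
  let '(P4 x y u v) := s in
  0 <= x /\ 0 <= y /\ 0 <= u /\ 0 <= v /\ x + y + u + v = 1 /\
  x + y > 0 /\ u + v > 0.

Definition V (s : pt4) : pt4 :=
  let '(P4 x y u v) := s in
  let d := (x + y) * (u + v) in
  P4 ((2*x*u + y*u) / (4 * d))
     ((6*x*v + 3*y*u + 4*y*v) / (12 * d))
     ((6*x*u + 6*x*v + 3*y*u + 4*y*v) / (12 * d))
     ((3*y*u + 4*y*v) / (12 * d)).

Fixpoint Viter (n : nat) (s : pt4) : pt4 :=
  match n with
  | O => s
  | S k => V (Viter k s)
  end.

Definition pfix : pt4 := P4 (1/2) 0 (1/2) 0.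

(* Convergence of a sequence in R^4 (coordinatewise = in the usual topology). *)
Definition cv4 (a : nat -> pt4) (l : pt4) : Prop :=
  Un_cv (fun n => px (a n)) (px l) /\ Un_cv (fun n => py (a n)) (py l) /\
  Un_cv (fun n => pu (a n)) (pu l) /\ Un_cv (fun n => pv (a n)) (pv l).

(* Open ball in R^4 for the max-norm (same topology as the Euclidean one). *)
Definition ball4 (c : pt4) (r : R) (s : pt4) : Prop :=
  Rabs (px s - px c) < r /\ Rabs (py s - py c) < r /\
  Rabs (pu s - pu c) < r /\ Rabs (pv s - pv c) < r.

Definition rel_open_S22 (U : pt4 -> Prop) : Prop :=
  (forall s, U s -> S22 s) /\
  (forall s, U s -> exists r, r > 0 /\ forall t, S22 t -> ball4 s r t -> U t).

(* V(x, y, u, v) depends only on the shares s = y/(x+y) and t = v/(u+v), and the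
   shares evolve by (s, t) |-> (s', t') with s' + t' <= s + t - s t / 4,
   s' >= 2s/9 + 4t/9 and t' >= s/2.  Hence L = s + t is a Lyapunov function,
   and the two lower bounds make the product of the shares two steps later at
   least (4/729) L^2, so L drops by L^2/729 every three steps and tends to 0.
   Since the coordinates of V(s) lie within s + t of p, every orbit in S^{2,2}
   converges to p, so U(p) can be taken to be all of S^{2,2}.  A fixed point has
   fixed shares, forcing s t = 0 and then s = t = 0, i.e. the point V(0, 0) = p. *)
From Stdlib Require Import Reals Lra Psatz Classical.
Open Scope R_scope.

Lemma Un_cv_0_of_quadratic_decrease (a : nat -> R) (m : nat) (c : R) :
  0 < c ->
  (forall n, 0 <= a n) ->
  (forall n, a (S n) <= a n) ->
  (forall n, a (m + n)%nat <= a n - c * a n ^ 2) ->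
  Un_cv a 0.
Proof.
  intros Hc Hpos Hdec Hgain eps Heps.
  assert (Hmono : forall n k, a (k + n)%nat <= a n).
  { intros n k; induction k as [|k IH]; simpl; [lra|].
    specialize (Hdec (k + n)%nat); lra. }
  assert (Hsmall : exists N, a N < eps).
  { apply NNPP; intros Hnone.
    assert (Hbig : forall N, eps <= a N).
    { intro N; apply Rnot_lt_le; intro HN; apply Hnone; now exists N. }
    assert (Hlin : forall k, a (k * m)%nat <= a O - INR k * (c * eps ^ 2)).
    { induction k as [|k IH]; [simpl; lra|].
      rewrite S_INR, Nat.mul_succ_l, Nat.add_comm.
      specialize (Hgain (k * m)%nat); specialize (Hbig (k * m)%nat).
      assert (eps ^ 2 <= a (k * m)%nat ^ 2) by (apply pow_incr; lra).
      nra. }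
    destruct (INR_archimed (c * eps ^ 2) (a O)) as [k Hk].
    { apply Rmult_lt_0_compat; [lra | apply pow_lt; lra]. }
    specialize (Hlin k); specialize (Hpos (k * m)%nat); lra. }
  destruct Hsmall as [N HN]; exists N; intros n Hn.
  unfold R_dist; rewrite Rminus_0_r, Rabs_right by (apply Rle_ge, Hpos).
  replace n with ((n - N) + N)%nat by lia.
  specialize (Hmono N (n - N)%nat); lra.
Qed.

Lemma Un_cv_of_shifted_bound (a b : nat -> R) (l : R) :
  Un_cv b 0 -> (forall n, Rabs (a (S n) - l) <= b n) -> Un_cv a l.
Proof.
  intros Hb Hab eps Heps.
  destruct (Hb eps Heps) as [N HN]; exists (S N); intros n Hn.
  destruct n as [|n]; [lia|].
  specialize (HN n ltac:(lia)); unfold R_dist in *.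
  rewrite Rminus_0_r in HN; specialize (Hab n).
  pose proof (Rle_abs (b n)); lra.
Qed.

Lemma share_in_unit_interval (a b : R) :
  0 <= a -> 0 <= b -> 0 < a + b -> 0 <= b / (a + b) <= 1.
Proof.
  intros Ha Hb Hab.
  assert (E : b / (a + b) * (a + b) = b) by (field; lra).
  split; nra.
Qed.

Definition share_y (q : pt4) : R := py q / (px q + py q).
Definition share_v (q : pt4) : R := pv q / (pu q + pv q).

Definition V_of_shares (s t : R) : pt4 :=
  P4 ((1 - t) * (2 - s) / 4) ((6*t + 3*s - 5*s*t) / 12)
     ((1 - s) / 2 + s * (3 + t) / 12) (s * (3 + t) / 12).

Definition next_s (s t : R) : R := (6*t + 3*s - 5*s*t) / (6 - 2*s*t).
Definition next_t (s t : R) : R := s * (3 + t) / (6 + 2*s*t).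

Lemma shares_in_unit_interval (q : pt4) :
  S22 q -> 0 <= share_y q <= 1 /\ 0 <= share_v q <= 1.
Proof.
  destruct q as [x y u v]; intros (?&?&?&?&?&?&?).
  unfold share_y, share_v; simpl; split; apply share_in_unit_interval; lra.
Qed.

Lemma V_eq_of_shares (q : pt4) :
  S22 q -> V q = V_of_shares (share_y q) (share_v q).
Proof.
  destruct q as [x y u v]; intros (?&?&?&?&?&?&?).
  unfold V, V_of_shares, share_y, share_v; simpl; f_equal; field; lra.
Qed.

Lemma V_of_shares_S22 (s t : R) :
  0 <= s <= 1 -> 0 <= t <= 1 -> S22 (V_of_shares s t).
Proof. intros Hs Ht; assert (0 <= s * t <= 1) by nra; repeat split; simpl; nra. Qed.

Lemma share_y_V_of_shares (s t : R) :
  0 <= s <= 1 -> 0 <= t <= 1 -> share_y (V_of_shares s t) = next_s s t.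
Proof. intros; unfold share_y, next_s; simpl; field; nra. Qed.

Lemma share_v_V_of_shares (s t : R) :
  0 <= s <= 1 -> 0 <= t <= 1 -> share_v (V_of_shares s t) = next_t s t.
Proof. intros; unfold share_v, next_t; simpl; field; nra. Qed.

Lemma V_of_shares_near_pfix (s t : R) :
  0 <= s <= 1 -> 0 <= t <= 1 ->
  Rabs (px (V_of_shares s t) - px pfix) <= s + t /\
  Rabs (py (V_of_shares s t) - py pfix) <= s + t /\
  Rabs (pu (V_of_shares s t) - pu pfix) <= s + t /\
  Rabs (pv (V_of_shares s t) - pv pfix) <= s + t.
Proof.
  intros Hs Ht; assert (0 <= s * t <= 1) by nra.
  repeat split; apply Rabs_le; simpl; split; nra.
Qed.

Lemma next_s_mul_denom (s t : R) :
  0 <= s <= 1 -> 0 <= t <= 1 -> next_s s t * (6 - 2*s*t) = 6*t + 3*s - 5*s*t.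
Proof. intros; unfold next_s; field; nra. Qed.

Lemma next_t_mul_denom (s t : R) :
  0 <= s <= 1 -> 0 <= t <= 1 -> next_t s t * (6 + 2*s*t) = s * (3 + t).
Proof. intros; unfold next_t; field; nra. Qed.

Lemma next_s_lower_bound (s t : R) :
  0 <= s <= 1 -> 0 <= t <= 1 -> 2/9 * s + 4/9 * t <= next_s s t.
Proof.
  intros Hs Ht; apply Rmult_le_reg_r with (6 - 2*s*t); [nra|].
  rewrite next_s_mul_denom by assumption; nra.
Qed.

Lemma next_t_lower_bound (s t : R) :
  0 <= s <= 1 -> 0 <= t <= 1 -> s / 2 <= next_t s t.
Proof.
  intros Hs Ht; apply Rmult_le_reg_r with (6 + 2*s*t); [nra|].
  rewrite next_t_mul_denom by assumption; assert (0 <= s * t) by nra; nra.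
Qed.

Lemma next_sum_decrease (s t : R) :
  0 <= s <= 1 -> 0 <= t <= 1 -> next_s s t + next_t s t <= s + t - s * t / 4.
Proof.
  intros Hs Ht; assert (0 <= s * t <= 1) by nra.
  apply Rmult_le_reg_r with ((6 - 2*s*t) * (6 + 2*s*t)); [nra|].
  replace ((next_s s t + next_t s t) * ((6 - 2*s*t) * (6 + 2*s*t)))
    with (next_s s t * (6 - 2*s*t) * (6 + 2*s*t) + next_t s t * (6 + 2*s*t) * (6 - 2*s*t))
    by ring.
  rewrite next_s_mul_denom, next_t_mul_denom by assumption; nra.
Qed.

Lemma fixed_shares_eq0 (s t : R) :
  0 <= s <= 1 -> 0 <= t <= 1 -> next_s s t = s -> next_t s t = t -> s = 0 /\ t = 0.
Proof.
  intros Hs Ht Es Et.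
  pose proof (next_sum_decrease s t Hs Ht) as Hsum.
  pose proof (next_s_mul_denom s t Hs Ht) as Ds.
  pose proof (next_t_mul_denom s t Hs Ht) as Dt.
  rewrite Es in Hsum, Ds; rewrite Et in Hsum, Dt.
  assert (Hst : s * t = 0) by nra.
  assert (Hs2t : s = 2 * t) by nra.
  subst s; split; nra.
Qed.

Section Orbit.

Variable q : pt4.
Hypothesis Hq : S22 q.

Let s_ (n : nat) : R := share_y (Viter n q).
Let t_ (n : nat) : R := share_v (Viter n q).

Lemma Viter_S22 (n : nat) : S22 (Viter n q).
Proof.
  induction n as [|n IH]; simpl; [exact Hq|].
  destruct (shares_in_unit_interval _ IH).
  rewrite V_eq_of_shares by exact IH; now apply V_of_shares_S22.
Qed.

Lemma orbit_shares_bounds (n : nat) : 0 <= s_ n <= 1 /\ 0 <= t_ n <= 1.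
Proof. apply shares_in_unit_interval, Viter_S22. Qed.

Lemma Viter_succ (n : nat) : Viter (S n) q = V_of_shares (s_ n) (t_ n).
Proof. apply V_eq_of_shares, Viter_S22. Qed.

Lemma orbit_shares_succ (n : nat) :
  s_ (S n) = next_s (s_ n) (t_ n) /\ t_ (S n) = next_t (s_ n) (t_ n).
Proof.
  destruct (orbit_shares_bounds n).
  split; [unfold s_ at 1 | unfold t_ at 1]; rewrite Viter_succ.
  - now apply share_y_V_of_shares.
  - now apply share_v_V_of_shares.
Qed.

Lemma orbit_sum_decrease (n : nat) :
  s_ (S n) + t_ (S n) <= s_ n + t_ n - s_ n * t_ n / 4.
Proof.
  destruct (orbit_shares_succ n) as [-> ->]; destruct (orbit_shares_bounds n).
  now apply next_sum_decrease.
Qed.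

Lemma orbit_sum_nonincreasing (n : nat) : s_ (S n) + t_ (S n) <= s_ n + t_ n.
Proof.
  pose proof (orbit_sum_decrease n); destruct (orbit_shares_bounds n).
  assert (0 <= s_ n * t_ n) by nra; lra.
Qed.

Lemma orbit_sum_three_steps (n : nat) :
  s_ (3 + n) + t_ (3 + n) <= s_ n + t_ n - 1/729 * (s_ n + t_ n) ^ 2.
Proof.
  destruct (orbit_shares_bounds n) as [Bs0 Bt0].
  destruct (orbit_shares_bounds (S n)) as [Bs1 Bt1].
  destruct (orbit_shares_bounds (S (S n))) as [Bs2 Bt2].
  destruct (orbit_shares_succ n) as [Es1 Et1].
  destruct (orbit_shares_succ (S n)) as [Es2 Et2].
  pose proof (next_s_lower_bound _ _ Bs0 Bt0).
  pose proof (next_t_lower_bound _ _ Bs0 Bt0).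
  pose proof (next_s_lower_bound _ _ Bs1 Bt1).
  pose proof (next_t_lower_bound _ _ Bs1 Bt1).
  pose proof (orbit_sum_nonincreasing n); pose proof (orbit_sum_nonincreasing (S n)).
  pose proof (orbit_sum_decrease (S (S n))).
  assert (Hs2 : 4/81 * (s_ n + t_ n) <= s_ (S (S n))) by lra.
  assert (Ht2 : 1/9 * (s_ n + t_ n) <= t_ (S (S n))) by lra.
  assert (4/729 * (s_ n + t_ n) ^ 2 <= s_ (S (S n)) * t_ (S (S n))).
  { replace (4/729 * (s_ n + t_ n) ^ 2) with (4/81 * (s_ n + t_ n) * (1/9 * (s_ n + t_ n)))
      by field.
    apply Rmult_le_compat; lra. }
  simpl plus; lra.
Qed.

Lemma orbit_sum_cv0 : Un_cv (fun n => s_ n + t_ n) 0.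
Proof.
  apply Un_cv_0_of_quadratic_decrease with (m := 3%nat) (c := 1/729).
  - lra.
  - intro n; destruct (orbit_shares_bounds n); lra.
  - exact orbit_sum_nonincreasing.
  - exact orbit_sum_three_steps.
Qed.

Lemma orbit_cv_pfix : cv4 (fun n => Viter n q) pfix.
Proof.
  assert (Hnear : forall n,
    Rabs (px (Viter (S n) q) - px pfix) <= s_ n + t_ n /\
    Rabs (py (Viter (S n) q) - py pfix) <= s_ n + t_ n /\
    Rabs (pu (Viter (S n) q) - pu pfix) <= s_ n + t_ n /\
    Rabs (pv (Viter (S n) q) - pv pfix) <= s_ n + t_ n).
  { intro n; destruct (orbit_shares_bounds n).
    rewrite Viter_succ; now apply V_of_shares_near_pfix. }
  repeat split; apply Un_cv_of_shifted_bound with (1 := orbit_sum_cv0);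
    intro n; apply Hnear.
Qed.

End Orbit.

Lemma pfix_S22 : S22 pfix.
Proof. unfold S22, pfix; lra. Qed.

Lemma pfix_V_of_shares : V_of_shares 0 0 = pfix.
Proof. unfold V_of_shares, pfix; f_equal; field. Qed.

Lemma V_fixed_eq_pfix (q : pt4) : S22 q -> V q = q -> q = pfix.
Proof.
  intros Hq Hfix.
  destruct (shares_in_unit_interval q Hq) as [Bs Bt].
  assert (Eq : q = V_of_shares (share_y q) (share_v q))
    by (rewrite <- Hfix at 1; now apply V_eq_of_shares).
  destruct (fixed_shares_eq0 (share_y q) (share_v q) Bs Bt) as [Es Et].
  - rewrite <- share_y_V_of_shares by assumption; now rewrite <- Eq.
  - rewrite <- share_v_V_of_shares by assumption; now rewrite <- Eq.
  - now rewrite Eq, Es, Et, pfix_V_of_shares.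
Qed.

Theorem theorem4p1 :
  (S22 pfix /\ V pfix = pfix /\ (forall s, S22 s -> V s = s -> s = pfix)) /\
  (exists U : pt4 -> Prop,
      rel_open_S22 U /\ U pfix /\
      forall s, U s -> cv4 (fun n => Viter n s) pfix).
Proof.
  split; [split; [| split] |].
  - exact pfix_S22.
  - unfold V, pfix; simpl; f_equal; field.
  - exact V_fixed_eq_pfix.
  - exists S22; split; [split |].
    + now intros s Hs.
    + intros s Hs; exists 1; split; [lra | now intros t Ht _].
    + split; [exact pfix_S22 | exact orbit_cv_pfix].
Qed.
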